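(* Let $E,E'\subset[0,1]$ be an $s$-regular set and a $t$-regular set respectively, with $s<t$, and suppose $\{0,1\}\subset E$. Then there is a map $f:[0,1]\to[0,1]$ which is bi-Lipschitz onto its image and satisfies $f(E)\subset E'$.
   Context: A compact set $E\subset\mathbb{R}$ is $s$-regular (Ahlfors $s$-regular) if there is a Borel measure $\kappa$ supported on $E$ and constants $0<c\le C$ with $c\,r^s\le\kappa(B(x,r))\le C\,r^s$ for all $x\in E$ and $0<r\le\mathrm{diam}(E)$. A map $f$ is bi-Lipschitz onto its image if $L^{-1}|x-y|\le|f(x)-f(y)|\le L|x-y|$ for all $x,y$, for some $L\ge1$. *)

From HB Require Import structures.
From mathcomp Require Import all_boot all_order all_algebra.
From mathcomp Require Import all_classical all_reals all_analysis.
Set Implicit Arguments. Unset Strict Implicit. Unset Printing Implicit Defensive.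
Import Order.TTheory GRing.Theory Num.Theory.
Import numFieldNormedType.Exports.
Local Open Scope classical_set_scope.
Local Open Scope ring_scope.

Definition diam {R : realType} (E : set R) : R :=
  sup [set `|x - y| | x in E & y in E].

Definition ahlfors_regular {R : realType} (s : R) (E : set R) : Prop :=
  compact E /\ 0 < diam E /\
  exists (kappa : {measure set R -> \bar R}) (c C : R),
    kappa (~` E) = 0%E /\ 0 < c /\ c <= C /\
    forall x r, E x -> 0 < r -> r <= diam E ->
      ((c * r `^ s)%:E <= kappa (ball x r))%E /\
      (kappa (ball x r) <= (C * r `^ s)%:E)%E.

Definition bilipschitz_on {R : realType} (A : set R) (f : R -> R) : Prop :=
  exists L : R, 1 <= L /\
    forall x y, A x -> A y ->
      L^-1 * `|x - y| <= `|f x - f y| /\ `|f x - f y| <= L * `|x - y|.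

From HB Require Import structures.
From mathcomp Require Import all_boot all_order all_algebra.
From mathcomp Require Import all_classical all_reals all_analysis.
From mathcomp Require Import zify ring lra.
Import Order.TTheory GRing.Theory Num.Theory.
Import numFieldNormedType.Exports.
Local Open Scope classical_set_scope.
Local Open Scope ring_scope.

Set Implicit Arguments.
Unset Strict Implicit.
Unset Printing Implicit Defensive.

Local Notation measurable_ball := measurable_realfun.measurable_ball.

(* Call two points of [E] d-linked when no gap of [E] longer than [d] separates
   them.  Because [s < 1], regularity of [E] forces d-linked points to lie
   within [K * d] of each other (a long gap-free stretch of [E] would carry too
   many disjoint balls), so each d-class splits into boundedly many classes at
   scale [d / (2 m)].  Because [t > s], around every point of [E'] a ball of
   radius [r] contains of the order of [m ^ t] points of [E'] that are
   [r / m]-separated, which for large [m] is more than the number of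
   subclasses.  Sending the classes of [E] at scale [(2 m) ^ -k] in increasing
   order to such points, nested in [k], codes each [x] in [E] by a Cauchy
   sequence of [E'] whose limit is a bi-Lipschitz map on [E]; linear
   interpolation across the gaps of [E] extends it to [[0, 1]]. *)

Lemma closed_mem_of_approx (R : realType) (A : set R) (x : R) : closed A ->
  (forall e : R, 0 < e -> exists a, A a /\ `|x - a| < e) -> A x.
Proof.
move=> cA approx; apply: contrapT => nAx.
have : open (~` A) by exact: closed_openC.
rewrite openE => /(_ x nAx) /nbhs_ballP[e /= e0 sub].
have [a [Aa xa]] := approx e e0.
exact: sub a xa Aa.
Qed.

Lemma powR_nat_unbounded (R : realType) (a A : R) (n0 : nat) : 0 < a ->
  exists m : nat, (n0 <= m)%N /\ A < m%:R `^ a.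
Proof.
move=> a0; set X := (`|A| + 1) `^ a^-1.
exists (Num.trunc X + n0.+1)%N; split; first by rewrite addnS ltnW // ltnS leq_addl.
have X0 : 0 <= X by apply: powR_ge0.
have Xm : X < (Num.trunc X + n0.+1)%:R.
  by apply: lt_le_trans (truncnS_gt X) _; rewrite ler_nat addnS ltnS leq_addr.
apply: le_lt_trans (_ : A <= X `^ a) (gt0_ltr_powR _ _ _ Xm) => //; last first.
  by rewrite nnegrE ler0n.
rewrite /X -powRrM mulVf ?gt_eqF // powRr1; last by rewrite addr_ge0.
by apply: le_trans (ler_norm A) _; rewrite lerDl.
Qed.

Lemma sorted_ltn_nth_gap (S : seq nat) a b : sorted ltn S -> (a <= b)%N ->
  (b < size S)%N -> (nth 0 S a + (b - a) <= nth 0 S b)%N.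
Proof.
move=> sS; elim: b => [|b IH]; first by rewrite leqn0 => /eqP ->; rewrite addn0.
rewrite leq_eqVlt => /orP [/eqP ->|]; first by rewrite subnn addn0.
rewrite ltnS => ab bS.
have := IH ab (ltnW bS).
have : (nth 0 S b < nth 0 S b.+1)%N.
  by apply: (sorted_ltn_nth ltn_trans) => //; rewrite inE // ltnW.
rewrite subSn //; lia.
Qed.

Lemma measure_big_setU_le d (T : measurableType d) (R : realFieldType)
    (mu : {measure set T -> \bar R}) (I : eqType) (l : seq I) (B : I -> set T) a :
  (forall j, measurable (B j)) -> (forall j, j \in l -> (mu (B j) <= a%:E)%E) ->
  (mu (\big[setU/set0]_(j <- l) B j) <= ((size l)%:R * a)%:E)%E.
Proof.
move=> mB; elim: l => [|j l IH] Bl; first by rewrite big_nil measure0 mul0r.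
rewrite big_cons.
apply: le_trans (measureU2 mu (mB j) (bigsetU_measurable _ (fun i _ => mB i))) _.
rewrite /= -addn1 natrD mulrDl mul1r EFinD addeC; apply: leeD.
  by apply: Bl; rewrite in_cons eqxx.
by apply: IH => i il; apply: Bl; rewrite in_cons il orbT.
Qed.

Definition ahlfors_bounds (R : realType) (mu : {measure set R -> \bar R})
    (F : set R) (s c C D : R) :=
  forall x r, F x -> 0 < r -> r <= D ->
    ((c * r `^ s)%:E <= mu (ball x r))%E /\ (mu (ball x r) <= (C * r `^ s)%:E)%E.

Section Cells.
Variables (R : realType) (F : set R).

Definition cell_len (r : R) (m : nat) : R := r * 2 / m%:R.

Definition cell (y r : R) (m j : nat) : set R := [set e | F e /\
  y - r + j%:R * cell_len r m <= e <= y - r + j.+1%:R * cell_len r m].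

Definition cell_pt (y r : R) (m j : nat) : R := xget 0 (cell y r m j).

Definition occupied_cells (y r : R) (m : nat) : seq nat :=
  [seq j <- iota 0 m | `[< cell y r m j !=set0 >] ].

Definition spread_pt (y r : R) (m i : nat) : R :=
  cell_pt y r m (nth 0%N (occupied_cells y r m) (3 * i)).

Variables (y r : R) (m : nat).
Hypotheses (r_gt0 : 0 < r) (m_ge4 : (4 <= m)%N).

Local Notation h := (cell_len r m).
Local Notation S := (occupied_cells y r m).

Let m_gt0 : 0 < m%:R :> R.
Proof. by rewrite ltr0n; lia. Qed.

Lemma cell_len_gt0 : 0 < h.
Proof. by rewrite /cell_len divr_gt0 ?mulr_gt0. Qed.

Lemma cell_len2_le : 2 * h <= r.
Proof.
rewrite /cell_len mulrA ler_pdivrMr //.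
have : 4 <= m%:R :> R by rewrite (ler_nat R 4 m).
by move: r_gt0; nra.
Qed.

Lemma occupied_cellP j : j \in S -> (j < m)%N /\ cell y r m j (cell_pt y r m j).
Proof.
rewrite mem_filter mem_iota => /andP [/asboolP [e Ie] /andP [_ jm]].
by split => //; apply: xgetI Ie.
Qed.

Lemma cell_pt_near j : j \in S -> F (cell_pt y r m j) /\ `|cell_pt y r m j - y| <= r.
Proof.
move=> /occupied_cellP [jm [Fz /andP [z1 z2]]]; split => //.
have hp := cell_len_gt0.
have mh : m%:R * h = r * 2 by rewrite /cell_len mulrC divfK // gt_eqF.
have H1 : j.+1%:R * h <= m%:R * h by rewrite ler_pM2r // ler_nat.
have H2 : 0 <= j%:R * h by rewrite mulr_ge0 // ltW.
by rewrite ler_norml; apply/andP; split; move: z1 z2; lra.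
Qed.

Lemma occupied_cells_cover :
  ball y r `&` F `<=` \big[setU/set0]_(j <- S) ball (cell_pt y r m j) (2 * h).
Proof.
have hp := cell_len_gt0.
move=> z [yz Fz]; rewrite -bigcup_seq.
have : `|y - z| < r := yz; rewrite ltr_norml => /andP [yz1 yz2].
set u := (z - (y - r)) / h.
have uh : u * h = z - (y - r) by rewrite /u divfK // gt_eqF.
have u0 : 0 <= u by rewrite /u divr_ge0 ?(ltW hp) //; lra.
have /andP [t1 t2] := truncn_itv u0.
have Iz : cell y r m (Num.trunc u) z.
  split => //; apply/andP; split.
    have : (Num.trunc u)%:R * h <= u * h by rewrite ler_pM2r.
    by rewrite uh; lra.
  have : u * h <= (Num.trunc u).+1%:R * h by rewrite ler_pM2r // ltW.
  by rewrite uh; lra.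
have jS : Num.trunc u \in S.
  rewrite mem_filter mem_iota /=; apply/andP; split; first by apply/asboolP; exists z.
  rewrite truncn_lt_nat // -(ltr_pM2r hp) uh /cell_len mulrC divfK ?gt_eqF //.
  lra.
exists (Num.trunc u) => //.
have [_ [_ /andP [w1 w2]]] := occupied_cellP jS.
move: Iz => [_ /andP [v1 v2]].
by rewrite /ball /= ltr_norml; move: w1 w2 v1 v2; rewrite -natr1 mulrDl mul1r; lra.
Qed.

Let spread_idx i : (i < size S %/ 3)%N -> (3 * i < size S)%N.
Proof. by rewrite leq_divRL //; lia. Qed.

Lemma spread_pt_near i : (i < size S %/ 3)%N ->
  F (spread_pt y r m i) /\ `|spread_pt y r m i - y| <= r.
Proof. by move=> /spread_idx iS; apply: cell_pt_near; apply: mem_nth. Qed.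

Lemma spread_pt_sep i i' : (i < i')%N -> (i' < size S %/ 3)%N ->
  spread_pt y r m i + 2 * h <= spread_pt y r m i'.
Proof.
move=> ii' i'S; have iS' := spread_idx i'S.
have iS : (3 * i < size S)%N by lia.
have S_sorted : sorted ltn S.
  exact: sorted_filter ltn_trans _ _ (iota_ltn_sorted 0 m).
have := sorted_ltn_nth_gap S_sorted (leq_mul (leqnn 3) (ltnW ii')) iS'.
rewrite /spread_pt; set J := nth 0 S (3 * i); set J' := nth 0 S (3 * i') => nth_gap.
have JJ : J%:R + 3 <= J'%:R :> R by rewrite -natrD ler_nat; lia.
have [_ [_ /andP [a1 a2]]] := occupied_cellP (mem_nth 0 iS).
have [_ [_ /andP [b1 b2]]] := occupied_cellP (mem_nth 0 iS').
have hp := cell_len_gt0.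
have : (J%:R + 3) * h <= J'%:R * h by rewrite ler_pM2r.
by move: a2 b1; rewrite -/J -/J' -natr1 !mulrDl !mul1r; lra.
Qed.

End Cells.

Section AhlforsRegular.
Variables (R : realType) (s : R) (F : set R) (mu : {measure set R -> \bar R}).
Variables (c C D : R).
Hypotheses (closedF : closed F) (muFC : mu (~` F) = 0%E).
Hypotheses (c_gt0 : 0 < c) (c_le_C : c <= C) (muF : ahlfors_bounds mu F s c C D).

Lemma le_measure_support (A B : set R) : measurable A -> measurable B ->
  A `&` F `<=` B -> (mu A <= mu B)%E.
Proof.
move=> mA mB AFB.
have mFC : measurable (~` F).
  exact: measurableC (measurable_realfun.closed_measurable closedF).
have sub : A `<=` ~` F `|` B.
  by move=> z Az; have [Fz|] := pselect (F z); [right; exact: AFB | left].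
apply: le_trans (le_measure mu (mem_set mA) (mem_set (measurableU _ _ mFC mB)) sub) _.
apply: le_trans (measureU2 mu mFC mB) _.
have muFB : (mu (~` F) + mu B = mu B)%E by rewrite muFC add0e.
by rewrite le_eqVlt; apply/orP; left; apply/eqP; exact: muFB.
Qed.

Lemma measure_separated_balls_ge (I : choiceType) (l : seq I) (p : I -> R) d :
  uniq l -> 0 < d -> d <= D -> (forall j, j \in l -> F (p j)) ->
  (forall i j, i \in l -> j \in l -> i != j -> 2 * d <= `|p i - p j|) ->
  (((size l)%:R * (c * d `^ s))%:E <= mu (\big[setU/set0]_(j <- l) ball (p j) d))%E.
Proof.
move=> + d0 dD; elim: l => [|j l IH] /= ul Fp sep.
  by rewrite big_nil measure0 mul0r.
move/andP: ul => [jl ul].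
have disj : ball (p j) d `&` \big[setU/set0]_(i <- l) ball (p i) d = set0.
  apply/seteqP; split => // z [Bjz]; rewrite -bigcup_seq => -[i /= il Biz].
  have := sep j i; rewrite !in_cons eqxx il orbT => /(_ isT isT).
  have -> : (j != i) by apply: contraNneq jl => ->.
  move=> /(_ isT); apply/negP; rewrite -ltNge.
  apply: le_lt_trans (ler_distD z _ _) _.
  by rewrite mulr2n mulrDl mul1r ltrD // distrC.
rewrite big_cons measureU //; last first.
- by apply: bigsetU_measurable => i _; apply: measurable_ball.
- exact: measurable_ball.
rewrite -addn1 natrD mulrDl mul1r EFinD addeC; apply: leeD.
  by have [] := muF (Fp j (mem_head _ _)) d0 dD.
apply: IH => //.
  by move=> i il; apply: Fp; rewrite in_cons il orbT.
by move=> i k il kl; apply: sep; rewrite in_cons ?il ?kl orbT.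
Qed.

Lemma occupied_size_ge y r m : F y -> 0 < r -> r <= D -> (4 <= m)%N ->
  c * (m%:R / 4) `^ s <= (size (occupied_cells F y r m))%:R * C.
Proof.
move=> Fy r0 rD m4; set h := cell_len r m.
have hp : 0 < h := cell_len_gt0 r0 m4.
have mp : 0 < m%:R :> R by rewrite ltr0n; lia.
have h2D : 2 * h <= D := le_trans (cell_len2_le r0 m4) rD.
have cover : c * r `^ s <= (size (occupied_cells F y r m))%:R * (C * (2 * h) `^ s).
  have mU : measurable (\big[setU/set0]_(j <- occupied_cells F y r m)
      ball (cell_pt F y r m j) (2 * h)).
    by apply: bigsetU_measurable => j _; apply: measurable_ball.
  have [lb _] := muF Fy r0 rD.
  rewrite -lee_fin; apply: le_trans lb _.
  apply: le_trans (le_measure_support (measurable_ball _ _) mU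
    (occupied_cells_cover r0 m4)) _.
  apply: measure_big_setU_le => [j|j jS]; first exact: measurable_ball.
  have [Fz _] := cell_pt_near r0 m4 jS.
  by have [] := muF Fz (mulr_gt0 (ltr0Sn _ _) hp) h2D.
move: cover; have -> : 2 * h = r * (4 / m%:R) by rewrite /h /cell_len; field; rewrite gt_eqF.
rewrite powRM ?(ltW r0) ?divr_ge0 ?(ltW mp) //.
have PQ : (4 / m%:R) `^ s * (m%:R / 4) `^ s = 1.
  rewrite -powRM ?divr_ge0 ?(ltW mp) //.
  by rewrite mulrA divfK ?gt_eqF // divff ?gt_eqF // powR1.
have rs : 0 < r `^ s by apply: powR_gt0.
set P := (4 / m%:R) `^ s in PQ *; set Q := (m%:R / 4) `^ s in PQ *.
set N := (size _)%:R.
have Q0 : 0 <= Q by apply: powR_ge0.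
have -> : N * (C * (r `^ s * P)) = (N * C * P) * r `^ s by ring.
rewrite ler_pM2r // => H.
by have := ler_wpM2r Q0 H; rewrite -[_ * P * Q]mulrA PQ mulr1.
Qed.

Lemma ahlfors_dim_ge0 x0 : F x0 -> 0 < D -> 0 <= s.
Proof.
move=> Fx D0; rewrite leNgt; apply/negP => s_lt0.
set a := C / c + 1.
have a1 : 1 <= a by rewrite lerDr divr_ge0 // ltW // (lt_le_trans c_gt0 c_le_C).
set l := a `^ s^-1.
have l0 : 0 < l by apply: powR_gt0; lra.
have l1 : l <= 1.
  by rewrite /l -(powRr0 a); apply: ler_powR => //; rewrite invr_le0 ltW.
have ls : l `^ s = a by rewrite /l -powRrM mulVf ?lt_eqF // powRr1 //; lra.
have lD0 : 0 < D * l by rewrite mulr_gt0.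
have lDD : D * l <= D by rewrite ler_piMr // ltW.
have [lb _] := muF Fx lD0 lDD.
have [_ ub] := muF Fx D0 (lexx D).
have sub : ball x0 (D * l) `<=` ball x0 D by apply: le_ball.
have := le_trans (le_trans lb (le_measure mu (mem_set (measurable_ball _ _))
  (mem_set (measurable_ball _ _)) sub)) ub.
rewrite lee_fin powRM ?(ltW D0) ?(ltW l0) // ls.
have Ds : 0 < D `^ s by apply: powR_gt0.
rewrite mulrCA mulrC ler_pM2r // /a mulrDr mulr1 mulrCA divff ?gt_eqF // mulr1.
by move: c_gt0; lra.
Qed.

Lemma ahlfors_dim_le1 y : F y -> 0 < D -> s <= 1.
Proof.
move=> Fy D0; rewrite leNgt; apply/negP => s_gt1.
set q := (4^-1 : R) `^ s.
have cq : 0 < c * q by rewrite mulr_gt0 // powR_gt0.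
have s1 : 0 < s - 1 by rewrite subr_gt0.
have [m [m4 Hm]] := powR_nat_unbounded (C / (c * q)) 4 s1.
have mp : 0 < m%:R :> R by rewrite ltr0n; lia.
have := occupied_size_ge Fy D0 (lexx D) m4.
set N := (size (occupied_cells F y D m))%:R.
have sz : N <= m%:R.
  by rewrite /N ler_nat size_filter (leq_trans (count_size _ _)) // size_iota.
have -> : c * (m%:R / 4) `^ s = m%:R `^ (s - 1) * (c * q) * m%:R.
  have ms : m%:R `^ s = m%:R `^ (s - 1) * m%:R :> R.
    rewrite -[X in _ * X](powRr1 (ltW mp)) -powRD ?subrK //.
    by apply/implyP => _; rewrite gt_eqF.
  by rewrite powRM ?(ltW mp) ?invr_ge0 // -/q ms; ring.
move: Hm; rewrite ltr_pdivrMr // => Hm.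
have : C * m%:R < m%:R `^ (s - 1) * (c * q) * m%:R by rewrite ltr_pM2r.
have : N * C <= m%:R * C by rewrite ler_wpM2r // ltW // (lt_le_trans c_gt0 c_le_C).
lra.
Qed.

End AhlforsRegular.

Section Gaps.
Variables (R : realType) (E : set R).

Definition gap (d x y : R) := exists u v,
  [/\ x <= u, v <= y, d < v - u & forall e, E e -> ~ (u < e < v)].

Definition linked (d x y : R) := ~ gap d x y /\ ~ gap d y x.

Lemma gap_lt d x y : gap d x y -> d < y - x.
Proof. by move=> [u [v [xu vy dvu _]]]; apply: lt_le_trans dvu _; lra. Qed.

Lemma gap_split d x y z : E y -> gap d x z -> gap d x y \/ gap d y z.
Proof.
move=> Ey [u [v [xu vz dvu free]]]; have := free y Ey.
case: (leP y u) => [yu _|uy]; first by right; exists u, v.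
by case: (leP v y) => [vy _|yv /(_ isT)]; first by left; exists u, v.
Qed.

Lemma linked_sym d x y : linked d x y -> linked d y x.
Proof. by move=> []. Qed.

Lemma linked_of_dist_le d x y : `|x - y| <= d -> linked d x y.
Proof.
move=> xy; split => /gap_lt; apply/negP; rewrite -leNgt;
  apply: le_trans xy; [rewrite distrC|]; apply: ler_norm.
Qed.

Lemma linked_refl d x : 0 <= d -> linked d x x.
Proof. by move=> d0; apply: linked_of_dist_le; rewrite subrr normr0. Qed.

Lemma dist_gt_of_not_linked d x y : ~ linked d x y -> d < `|x - y|.
Proof. by move=> nxy; rewrite ltNge; apply/negP => /linked_of_dist_le. Qed.

Lemma linked_le d d' x y : d <= d' -> linked d x y -> linked d' x y.
Proof.
move=> dd [xy yx]; split => -[u [v [xu vy dvu free]]]; [apply: xy|apply: yx];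
  exists u, v; split => //; exact: le_lt_trans dd dvu.
Qed.

Lemma linked_trans d x y z : E y -> linked d x y -> linked d y z -> linked d x z.
Proof.
by move=> Ey [xy yx] [yz zy]; split => /(gap_split Ey) [].
Qed.

Lemma gap_of_not_linked d x y : x <= y -> ~ linked d x y -> gap d x y.
Proof.
move=> xy nxy; apply: contrapT => nxy'; apply: nxy; split => // /gap_lt.
have : 0 <= d.
  rewrite leNgt; apply/negP => d0; apply: nxy'; exists x, x.
  by split => //; [rewrite subrr | move=> e _; lra].
lra.
Qed.

Hypothesis E_ge0 : forall x, E x -> 0 <= x.

Definition class_start (d y : R) : R := inf [set z | E z /\ linked d z y].

Lemma class_start_bounds d y : 0 <= d -> E y -> 0 <= class_start d y <= y.
Proof.
move=> d0 Ey; set S := [set z | E z /\ linked d z y].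
have Sy : S y by split => //; apply: linked_refl.
have lb : lbound S 0 by move=> z [Ez _]; apply: E_ge0.
apply/andP; split; first by apply: lb_le_inf => //; exists y.
by apply: ge_inf => //; exists 0.
Qed.

Lemma class_start_linked d y y' : E y -> E y' -> linked d y y' ->
  class_start d y = class_start d y'.
Proof.
move=> Ey Ey' yy'; rewrite /class_start; congr (inf _).
apply/seteqP; split => z [Ez zy]; split => //.
  exact: linked_trans Ey zy yy'.
exact: linked_trans Ey' zy (linked_sym yy').
Qed.

Lemma class_start_sep d y y' : 0 <= d -> E y -> E y' -> y < y' ->
  ~ linked d y y' -> class_start d y + d < class_start d y'.
Proof.
move=> d0 Ey Ey' yy' nyy'.
have [u [v [yu vy' dvu free]]] := gap_of_not_linked (ltW yy') nyy'.
have /andP [_ sy] := class_start_bounds d0 Ey.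
suff : v <= class_start d y' by lra.
apply: lb_le_inf; first by exists y'; split => //; apply: linked_refl.
move=> z [Ez [nzy' _]]; rewrite leNgt; apply/negP => zv.
have := free z Ez; case: (leP z u) => [zu _|uz]; first by apply: nzy'; exists u, v.
by rewrite zv => /(_ isT).
Qed.

End Gaps.

Section UnitRegular.
Variables (R : realType) (s : R) (E : set R) (mu : {measure set R -> \bar R}).
Variables (c C : R).
Hypotheses (closedE : closed E) (E01 : forall x, E x -> 0 <= x <= 1).
Hypotheses (E0 : E 0) (E1 : E 1) (muEC : mu (~` E) = 0%E).
Hypotheses (c_gt0 : 0 < c) (c_le_C : c <= C) (muE : ahlfors_bounds mu E s c C 1).
Hypotheses (s_ge0 : 0 <= s) (s_lt1 : s < 1).

Let C_gt0 : 0 < C. Proof. exact: lt_le_trans c_gt0 c_le_C. Qed.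

Let E_ge0 x : E x -> 0 <= x. Proof. by move=> /E01 /andP []. Qed.

Lemma measure_ball_le x r : E x -> 0 < r -> (mu (ball x r) <= (2 * C * r `^ s)%:E)%E.
Proof.
move=> Ex r0; have rs : 0 <= r `^ s by apply: powR_ge0.
case: (leP r 1) => r1.
  have [_ ub] := muE Ex r0 r1; apply: le_trans ub _; rewrite lee_fin -mulrA.
  by apply: ler_peMl; [rewrite mulr_ge0 // ltW | lra].
have cover : ball x r `&` E `<=` ball (0 : R) 1 `|` ball (1 : R) 1.
  move=> z [_ Ez]; have /andP [z0 z1] := E01 Ez.
  have [zl|ze] := ltP z 1; first by left; rewrite /ball /= sub0r normrN ger0_norm.
  by right; rewrite /ball /= (_ : z = 1) ?subrr ?normr0 //; apply/eqP; rewrite eq_le z1 ze.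
have mB : measurable (ball (0 : R) 1 `|` ball (1 : R) 1).
  by apply: measurableU; apply: measurable_ball.
apply: le_trans (le_measure_support closedE muEC (measurable_ball _ _) mB cover) _.
apply: le_trans (measureU2 mu (measurable_ball _ _) (measurable_ball _ _)) _.
have [_ ub0] := muE E0 ltr01 (lexx 1); have [_ ub1] := muE E1 ltr01 (lexx 1).
apply: le_trans (leeD ub0 ub1) _; rewrite powR1 mulr1 -EFinD lee_fin.
have r1s : 1 <= r `^ s.
  apply: le_trans (_ : (1 : R) `^ s <= _); first by rewrite powR1.
  by apply: ge0_ler_powR => //; rewrite ?nnegrE ltW.
by move: C_gt0; nra.
Qed.

Lemma packing_bound (I : choiceType) x R0 d (l : seq I) (p : I -> R) :
  E x -> 0 < d -> d <= 1 -> 0 <= R0 -> uniq l ->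
  (forall j, j \in l -> E (p j) /\ `|p j - x| <= R0) ->
  (forall i j, i \in l -> j \in l -> i != j -> 2 * d <= `|p i - p j|) ->
  (size l)%:R * (c * d `^ s) <= 2 * C * (R0 + d) `^ s.
Proof.
move=> Ex d0 d1 R00 ul near sep.
have lb := measure_separated_balls_ge muE ul d0 d1 (fun j jl => (near j jl).1) sep.
have sub : \big[setU/set0]_(j <- l) ball (p j) d `<=` ball x (R0 + d).
  move=> z; rewrite -bigcup_seq => -[j /= jl pz].
  apply: le_lt_trans (ler_distD (p j) _ _) _.
  by rewrite ler_ltD // distrC; have [] := near j jl.
have mU : measurable (\big[setU/set0]_(j <- l) ball (p j) d).
  by apply: bigsetU_measurable => j _; apply: measurable_ball.
rewrite -lee_fin; apply: le_trans lb _.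
apply: le_trans (le_measure mu (mem_set mU) (mem_set (measurable_ball _ _)) sub) _.
by apply: measure_ball_le => //; apply: ltr_wpDl.
Qed.

Lemma linked_points_count d x y : E x -> 0 < d -> d <= 1 -> x <= y ->
  linked E d x y ->
  (Num.trunc ((y - x) / d / 4))%:R * (c * d `^ s) <= 2 * C * ((y - x) + d) `^ s.
Proof.
move=> Ex d0 d1 xy lxy.
set L := y - x; set n := Num.trunc _.
have L0 : 0 <= L by rewrite subr_ge0.
have d4 : 0 < 4 * d by rewrite mulr_gt0.
have nL : n%:R * (4 * d) <= L.
  have : n%:R <= L / d / 4 by rewrite truncn_le !divr_ge0 // ltW.
  by rewrite ler_pdivlMr // ler_pdivlMr // mulrA.
pose u j := x + j%:R * (4 * d).
have u_le j : (j < n)%N -> u j + 2 * d <= y.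
  move=> jn; have : j.+1%:R * (4 * d) <= n%:R * (4 * d) by rewrite ler_pM2r // ler_nat.
  by rewrite -natr1 /u; move: nL; rewrite /L; lra.
pose p j := xget 0 [set e | E e /\ u j < e < u j + 2 * d].
have pP j : (j < n)%N -> E (p j) /\ u j < p j < u j + 2 * d.
  move=> jn; apply: (@xgetPex _ 0 [set e | E e /\ u j < e < u j + 2 * d]).
  apply: contrapT => nex; apply: lxy.1.
  exists (u j), (u j + 2 * d); split; [|exact: u_le| lra|].
  - by rewrite /u lerDl mulr_ge0 // ltW.
  - by move=> e Ee ue; apply: nex; exists e.
have p_sep i j : (i < j)%N -> (j < n)%N -> 2 * d <= p j - p i.
  move=> ij jn; have [_ /andP [_ pi]] := pP i (ltn_trans ij jn).
  have [_ /andP [pj _]] := pP j jn.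
  have : (i%:R + 1) * (4 * d) <= j%:R * (4 * d) by rewrite ler_pM2r // natr1 ler_nat.
  by move: pi pj; rewrite /u; lra.
have := @packing_bound _ x L d (iota 0 n) p Ex d0 d1 L0 (iota_uniq 0 n).
rewrite size_iota; apply.
- move=> j; rewrite mem_iota add0n => /andP [_ jn].
  have [Ep /andP [pj1 pj2]] := pP j jn; split => //.
  have := u_le j jn; have : 0 <= j%:R * (4 * d) by rewrite mulr_ge0 // ltW.
  by rewrite ler_norml; move: pj1 pj2; rewrite /u /L; lra.
- move=> i j; rewrite !mem_iota !add0n => /andP [_ i_n] /andP [_ jn].
  case: (ltngtP i j) => // ij _; last by rewrite ler_normr p_sep.
  by rewrite distrC ler_normr p_sep.
Qed.

Definition link_const : R := Num.max 8 ((32 * C / c) `^ (1 - s)^-1).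

Lemma link_const_ge8 : 8 <= link_const.
Proof. by rewrite le_max lexx. Qed.

Lemma link_const_large lam : link_const < lam -> 32 * C * lam `^ s < c * lam.
Proof.
move=> lamK; have lam0 : 0 < lam by have := link_const_ge8; lra.
have s1 : 0 < 1 - s by rewrite subr_gt0.
set X := (32 * C / c) `^ (1 - s)^-1.
have X_lt : X < lam by apply: le_lt_trans lamK; rewrite le_max lexx orbT.
have XsE : X `^ (1 - s) = 32 * C / c.
  by rewrite /X -powRrM mulVf ?gt_eqF // powRr1 // divr_ge0 ?mulr_ge0 ?ltW.
have : 32 * C / c < lam `^ (1 - s).
  by rewrite -XsE; apply: gt0_ltr_powR => //; rewrite nnegrE ?powR_ge0 // ltW.
have -> : c * lam = c * lam `^ (1 - s) * lam `^ s.
  by rewrite -mulrA -powRD ?subrK ?powRr1 ?(ltW lam0) // gt_eqF ?orbT.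
by move=> big; rewrite ltr_pM2r ?powR_gt0 // (mulrC c) -ltr_pdivrMr.
Qed.

Lemma linked_dist_le d x y : E x -> E y -> 0 < d -> d <= 1 -> linked E d x y ->
  `|x - y| <= link_const * d.
Proof.
wlog xy : x y / x <= y.
  move=> W Ex Ey d0 d1 lxy; case: (leP x y) => [|/ltW] yx; first exact: W.
  by rewrite distrC; apply: W => //; exact: linked_sym.
move=> Ex Ey d0 d1 lxy; rewrite distrC ger0_norm ?subr_ge0 //.
have := linked_points_count Ex d0 d1 xy lxy.
set L := y - x; set lam := L / d; set n := Num.trunc _ => count.
rewrite leNgt; apply/negP => KL.
have Ld : L = lam * d by rewrite /lam divfK // gt_eqF.
have lamK : link_const < lam by rewrite /lam ltr_pdivlMr.
have lam8 : 8 < lam := le_lt_trans link_const_ge8 lamK.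
have lam0 : 0 < lam by lra.
have ds0 : 0 < d `^ s by apply: powR_gt0.
have n_gt : lam / 8 * c < n%:R * c.
  rewrite ltr_pM2r //.
  by have := truncnS_gt (lam / 4); rewrite -/n -[n.+1%:R]natr1; lra.
have Ld2 : (L + d) `^ s <= 2 * lam `^ s * d `^ s.
  apply: le_trans (_ : _ <= (2 * L) `^ s) _.
    have dL : d <= L by rewrite Ld -[X in X <= _]mul1r ler_pM2r //; lra.
    by apply: ge0_ler_powR => //; rewrite ?nnegrE; lra.
  have L0 : 0 <= L by rewrite Ld mulr_ge0 ?ltW.
  rewrite (powRM s (ler0n R 2) L0) Ld (powRM s (ltW lam0) (ltW d0)) mulrA.
  rewrite !ler_pM2r ?powR_gt0 //.
  by rewrite -[X in _ <= X]powRr1 ?ler_powR // ?ltW //; lra.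
have n_le : n%:R * c <= 4 * C * lam `^ s.
  rewrite -(ler_pM2r ds0) -[leLHS]mulrA; apply: le_trans count _.
  apply: le_trans (ler_wpM2l _ Ld2) _; first by rewrite mulr_ge0 ?ltW.
  by rewrite le_eqVlt; apply/orP; left; apply/eqP; ring.
by have := link_const_large lamK; lra.
Qed.

Section Coding.
Variables (t : R) (E' : set R) (mu' : {measure set R -> \bar R}) (c' C' D' : R).
Hypotheses (closedE' : closed E') (muE'C : mu' (~` E') = 0%E).
Hypotheses (c'_gt0 : 0 < c') (c'_le_C' : c' <= C').
Hypotheses (muE' : ahlfors_bounds mu' E' t c' C' D') (D'_gt0 : 0 < D').
Variables (y0 : R) (m : nat).
Hypotheses (E'y0 : E' y0) (m_ge4 : (4 <= m)%N).
(* A class of level [k] has fewer subclasses of level [k.+1] (bounded by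
   [child_rank_bound]) than a third of the occupied cells available around its
   image in [E'] (bounded below by [occupied_size_ge]). *)
Hypothesis branching :
  3 * (2 * C * (8 * link_const * m%:R) `^ s) * C' <= c * (c' * (m%:R / 4) `^ t).

Local Notation K := link_const.

Definition ratio : R := (2 * m%:R)^-1.
Definition scale (k : nat) : R := ratio ^+ k.
Definition radius (k : nat) : R := D' * scale k.

(* Distinct classes of level [k.+1] start more than [scale k.+1] apart
   ([class_start_sep]), so they receive distinct slots, in increasing order. *)
Definition slot (k : nat) (y : R) : nat :=
  Num.trunc (class_start E (scale k.+1) y / scale k.+1).

Definition slot_used (k : nat) (x : R) (j : nat) : bool :=
  `[< exists y, E y /\ linked E (scale k) y x /\ slot k y = j >].

Definition child_rank (k : nat) (x : R) : nat :=
  count (slot_used k x) (iota 0 (slot k x)).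

Fixpoint center (k : nat) (x : R) : R :=
  if k is k'.+1 then spread_pt E' (center k' x) (radius k') m (child_rank k' x)
  else y0.

Definition embed (x : R) : R := sup (range (fun k => center k x - 2 * radius k)).

Let m_ge4R : 4 <= m%:R :> R.
Proof. by rewrite (ler_nat R 4 m). Qed.

Let m_gt0 : 0 < m%:R :> R.
Proof. by rewrite ltr0n (ltn_trans _ m_ge4). Qed.

Let m_neq0 : m%:R != 0 :> R := lt0r_neq0 m_gt0.

Lemma ratio_gt0 : 0 < ratio.
Proof. by rewrite /ratio invr_gt0 mulr_gt0. Qed.

Lemma ratio_le : ratio <= 8^-1.
Proof. by rewrite /ratio lef_pV2 ?posrE ?mulr_gt0 //; move: m_ge4R; lra. Qed.

Lemma scale_gt0 k : 0 < scale k.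
Proof. by rewrite exprn_gt0 // ratio_gt0. Qed.

Lemma scaleS k : scale k.+1 = scale k * ratio.
Proof. exact: exprSr. Qed.

Lemma scale_le1 k : scale k <= 1.
Proof. by rewrite exprn_ile1 ?ltW ?ratio_gt0 //; have := ratio_le; lra. Qed.

Lemma scaleS_le k : scale k.+1 <= scale k.
Proof. by rewrite scaleS ger_pMr ?scale_gt0 //; have := ratio_le; lra. Qed.

Lemma scale_lt e : 0 < e -> exists k, scale k < e.
Proof.
move=> e0; have ratio_lt1 : `|ratio| < 1.
  by rewrite ger0_norm ?ltW ?ratio_gt0 //; have := ratio_le; lra.
have /cvgrPdist_lt /(_ e e0) [N _ near0] := cvg_expr ratio_lt1.
by exists N; have := near0 N (leqnn N); rewrite sub0r normrN ger0_norm ?ltW ?scale_gt0.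
Qed.

Lemma radius_gt0 k : 0 < radius k.
Proof. by rewrite mulr_gt0 ?scale_gt0. Qed.

Lemma radius_le k : radius k <= D'.
Proof. by rewrite ler_piMr ?scale_le1 // ltW. Qed.

Lemma radiusS_le k : radius k.+1 <= radius k / 8.
Proof.
by rewrite /radius scaleS mulrA ler_pM2l ?ratio_le // mulr_gt0 ?scale_gt0.
Qed.

Lemma linked_scale0 x x' : E x -> E x' -> linked E (scale 0) x x'.
Proof.
move=> Ex Ex'; apply: linked_of_dist_le; rewrite /scale expr0.
have /andP [x0 x1] := E01 Ex; have /andP [x'0 x'1] := E01 Ex'.
by rewrite ler_norml; apply/andP; split; lra.
Qed.

Lemma slot_used_linked k x x' : E x -> E x' -> linked E (scale k) x x' ->
  slot_used k x =1 slot_used k x'.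
Proof.
move=> Ex Ex' xx' j; apply/asboolP/asboolP => -[y [Ey [yx <-]]].
  by exists y; split => //; split => //; exact: linked_trans Ex yx xx'.
by exists y; split => //; split => //; exact: linked_trans Ex' yx (linked_sym xx').
Qed.

Lemma slot_linked k x x' : E x -> E x' -> linked E (scale k.+1) x x' ->
  slot k x = slot k x'.
Proof. by move=> Ex Ex' xx'; rewrite /slot (class_start_linked Ex Ex' xx'). Qed.

Lemma center_linked k x x' : E x -> E x' -> linked E (scale k) x x' ->
  center k x = center k x'.
Proof.
elim: k x x' => // k IH x x' Ex Ex' xx' /=.
have xx'k : linked E (scale k) x x' := linked_le (scaleS_le k) xx'.
rewrite (IH x x' Ex Ex' xx'k) /child_rank (slot_linked Ex Ex' xx').
by rewrite (eq_count (slot_used_linked Ex Ex' xx'k)).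
Qed.

Lemma class_packing k x (l : seq nat) (p : nat -> R) : E x -> uniq l ->
  (forall j, j \in l -> E (p j) /\ linked E (scale k) (p j) x) ->
  (forall i j, i \in l -> j \in l -> i != j -> ~ linked E (scale k.+1) (p i) (p j)) ->
  (size l)%:R * c <= 2 * C * (8 * K * m%:R) `^ s.
Proof.
move=> Ex ul lp nlp; pose d := scale k.+1 / 2.
have d0 : 0 < d by rewrite divr_gt0 ?scale_gt0.
have d_le : d <= scale k by have := scaleS_le k; have := scale_gt0 k.+1; rewrite /d; lra.
have near j : j \in l -> E (p j) /\ `|p j - x| <= K * scale k.
  move=> jl; have [Ep px] := lp j jl; split => //.
  exact: linked_dist_le Ep Ex (scale_gt0 k) (scale_le1 k) px.
have sep i j : i \in l -> j \in l -> i != j -> 2 * d <= `|p i - p j|.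
  move=> il jl ij; have := dist_gt_of_not_linked (nlp i j il jl ij).
  by rewrite /d mulrC divfK //; exact: ltW.
have K8 := link_const_ge8.
have Ksk0 : 0 <= K * scale k by rewrite mulr_ge0 ?ltW ?scale_gt0 //; lra.
have pack := packing_bound Ex d0 (le_trans d_le (scale_le1 k)) Ksk0 ul near sep.
rewrite -(ler_pM2r (powR_gt0 s d0)) -[leLHS]mulrA -[leRHS]mulrA.
apply: le_trans pack _; rewrite ler_pM2l ?mulr_gt0 ?C_gt0 //.
have Km0 : 0 <= 8 * K * m%:R by rewrite !mulr_ge0 //; lra.
rewrite -powRM ?(ltW d0) //; apply: ge0_ler_powR => //.
- by rewrite nnegrE; apply: addr_ge0 => //; exact: ltW.
- by rewrite nnegrE; apply: mulr_ge0 => //; exact: ltW.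
have -> : 8 * K * m%:R * d = 2 * (K * scale k).
  by rewrite /d scaleS /ratio; field; exact: m_neq0.
have : scale k <= K * scale k by rewrite ler_peMl ?ltW ?scale_gt0 //; lra.
by lra.
Qed.

Lemma child_rank_bound k x : E x ->
  (child_rank k x).+1%:R * c <= 2 * C * (8 * K * m%:R) `^ s.
Proof.
move=> Ex; set n := slot k x; set P := slot_used k x.
have Pn : P n by apply/asboolP; exists x; split => //; split => //;
  apply/linked_refl/ltW/scale_gt0.
set l := [seq j <- iota 0 n.+1 | P j].
have <- : size l = (child_rank k x).+1.
  by rewrite size_filter -addn1 iotaD count_cat /= Pn addn0 addn1.
pose p j := xget 0 [set y | E y /\ linked E (scale k) y x /\ slot k y = j].
have pP j : j \in l -> E (p j) /\ linked E (scale k) (p j) x /\ slot k (p j) = j.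
  rewrite mem_filter => /andP [/asboolP Pj _].
  exact: (@xgetPex _ 0 [set y | E y /\ linked E (scale k) y x /\ slot k y = j]).
have lp j : j \in l -> E (p j) /\ linked E (scale k) (p j) x.
  by move=> /pP [Ep [px _]].
have nlp i j : i \in l -> j \in l -> i != j -> ~ linked E (scale k.+1) (p i) (p j).
  move=> /pP [Epi [_ si]] /pP [Epj [_ sj]] ij pp.
  by move/eqP: ij; apply; rewrite -si -sj; exact: slot_linked.
exact: class_packing Ex (filter_uniq _ (iota_uniq _ _)) lp nlp.
Qed.

Lemma child_rank_lt k x y : E x -> E' y ->
  (child_rank k x < size (occupied_cells E' y (radius k) m) %/ 3)%N.
Proof.
move=> Ex Ey.
have := occupied_size_ge closedE' muE'C c'_gt0 c'_le_C' muE' Ey (radius_gt0 k)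
  (radius_le k) m_ge4.
have := child_rank_bound k Ex.
rewrite leq_divRL // -(ler_nat R) natrM.
set N := (size _)%:R; set r1 := (child_rank k x).+1%:R.
set Q := 2 * C * (8 * K * m%:R) `^ s => r1_le N_ge.
have C'0 : 0 < C' by apply: lt_le_trans c'_le_C'.
rewrite -(ler_pM2r (mulr_gt0 c_gt0 C'0)).
have -> : r1 * 3 * (c * C') = 3 * (r1 * c) * C' by ring.
have -> : N * (c * C') = c * (N * C') by ring.
apply: le_trans (_ : 3 * Q * C' <= _); first by rewrite ler_pM2r // ler_pM2l.
by apply: le_trans branching _; rewrite ler_pM2l.
Qed.

Lemma center_mem k x : E x -> E' (center k x).
Proof.
move=> Ex; elim: k => [|k IH] //=.
exact: (spread_pt_near (radius_gt0 k) m_ge4 (child_rank_lt k Ex IH)).1.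
Qed.

Lemma center_dist k x : E x -> `|center k.+1 x - center k x| <= radius k.
Proof.
move=> Ex.
exact: (spread_pt_near (radius_gt0 k) m_ge4 (child_rank_lt k Ex (center_mem k Ex))).2.
Qed.

Lemma slot_lt k x x' : E x -> E x' -> x < x' -> ~ linked E (scale k.+1) x x' ->
  (slot k x < slot k x')%N.
Proof.
move=> Ex Ex' xx' nxx'.
have d0 := scale_gt0 k.+1.
have := class_start_sep E_ge0 (ltW d0) Ex Ex' xx' nxx'.
have /andP [a0 _] := class_start_bounds E_ge0 (ltW d0) Ex.
rewrite /slot; set a := class_start E _ x; set a' := class_start E _ x' => aa'.
have aa'd : a / scale k.+1 + 1 < a' / scale k.+1.
  by rewrite -(ltr_pM2r d0) mulrDl !divfK ?gt_eqF // mul1r.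
have ad0 : 0 <= a / scale k.+1 by rewrite divr_ge0 // ltW.
have t1 := truncn_le (a / scale k.+1); rewrite ad0 in t1.
have t2 := truncnS_gt (a' / scale k.+1).
by rewrite -natr1 in t2; rewrite -(ltr_nat R); lra.
Qed.

Lemma child_rank_split k x x' : E x -> E x' -> x < x' ->
  linked E (scale k) x x' -> ~ linked E (scale k.+1) x x' ->
  (child_rank k x < child_rank k x')%N.
Proof.
move=> Ex Ex' xx' lxx' nxx'.
have nn := slot_lt Ex Ex' xx' nxx'.
rewrite /child_rank (eq_count (slot_used_linked Ex' Ex (linked_sym lxx'))).
set n := slot k x; set n' := slot k x' in nn *.
have Pn : slot_used k x n.
  by apply/asboolP; exists x; split => //; split => //; apply/linked_refl/ltW/scale_gt0.
rewrite -(subnKC nn) iotaD count_cat add0n.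
have -> : iota 0 n.+1 = iota 0 n ++ [:: n] by rewrite -addn1 iotaD.
by rewrite count_cat /= Pn addn0 addn1 addSn ltnS leq_addr.
Qed.

Lemma center_sep k x x' : E x -> E x' -> x < x' ->
  linked E (scale k) x x' -> ~ linked E (scale k.+1) x x' ->
  center k.+1 x + 8 * D' * scale k.+1 <= center k.+1 x'.
Proof.
move=> Ex Ex' xx' lxx' nxx' /=; rewrite (center_linked Ex Ex' lxx').
have := spread_pt_sep (radius_gt0 k) m_ge4 (child_rank_split Ex Ex' xx' lxx' nxx')
  (child_rank_lt k Ex' (center_mem k Ex')).
have -> // : 2 * cell_len (radius k) m = 8 * D' * scale k.+1.
by rewrite /cell_len /radius scaleS /ratio; field; exact: m_neq0.
Qed.

Lemma embed_near k x : E x -> `|embed x - center k x| <= 2 * radius k.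
Proof.
move=> Ex; pose lo j := center j x - 2 * radius j; pose hi j := center j x + 2 * radius j.
have step j : lo j <= lo j.+1 /\ hi j.+1 <= hi j.
  have := center_dist j Ex; have := radiusS_le j; have := radius_gt0 j.
  by rewrite /lo /hi ler_norml => ? ? /andP [? ?]; split; lra.
have lo_mono : {homo lo : i j / (i <= j)%N >-> i <= j}.
  by apply/nondecreasing_seqP => j; case: (step j).
have hi_mono : {homo hi : i j / (i <= j)%N >-> j <= i}.
  by apply/nonincreasing_seqP => j; case: (step j).
have lo_hi i j : lo i <= hi j.
  apply: le_trans (lo_mono _ _ (leq_maxl i j)) _; apply: le_trans (hi_mono _ _ (leq_maxr i j)).
  by rewrite /lo /hi; have := radius_gt0 (maxn i j); lra.
have ub : has_ubound (range lo) by exists (hi 0%N) => _ [i _ <-]; exact: lo_hi.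
have ne : range lo !=set0 by exists (lo 0%N), 0%N.
have e_ge : lo k <= embed x by apply: (ub_le_sup ub); exists k.
have e_le : embed x <= hi k by apply: (ge_sup ne) => _ [i _ <-]; exact: lo_hi.
by move: e_ge e_le; rewrite ler_norml /lo /hi => ? ?; apply/andP; split; lra.
Qed.

Lemma embed_mem x : E x -> E' (embed x).
Proof.
move=> Ex; apply: closed_mem_of_approx closedE' _ => e e0.
have [k ke] := scale_lt (divr_gt0 e0 (mulr_gt0 (ltr0Sn _ _) D'_gt0) : 0 < e / (2 * D')).
exists (center k x); split; first exact: center_mem.
apply: le_lt_trans (embed_near k Ex) _.
by move: ke; rewrite /radius ltr_pdivlMr ?mulr_gt0 //; lra.
Qed.

Lemma split_level x x' : E x -> E x' -> x < x' ->
  exists k, linked E (scale k) x x' /\ ~ linked E (scale k.+1) x x'.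
Proof.
move=> Ex Ex' xx'; have K0 : 0 < K by have := link_const_ge8; lra.
have dx : 0 < (x' - x) / K by rewrite divr_gt0 // subr_gt0.
have [k0 k0_lt] := scale_lt dx.
have unlinked : exists k, ~~ `[< linked E (scale k) x x' >].
  exists k0; apply/negP => /asboolP l0.
  have := linked_dist_le Ex Ex' (scale_gt0 k0) (scale_le1 k0) l0.
  rewrite distrC ger0_norm; last by rewrite subr_ge0 ltW.
  by move: k0_lt; rewrite ltr_pdivlMr //; lra.
case: (ex_minnP unlinked) => -[|k] /asboolPn nl min_k.
  by case: nl; exact: linked_scale0.
exists k; split => //; apply: contrapT => nlk.
suff : (k.+1 <= k)%N by rewrite ltnn.
by apply: min_k; apply/asboolPn.
Qed.

Lemma embed_bilip x x' : E x -> E x' -> x < x' ->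
  (4 * D' * ratio / K) * (x' - x) <= embed x' - embed x /\
  embed x' - embed x <= (4 * D' / ratio) * (x' - x).
Proof.
move=> Ex Ex' xx'; have [k [lk nlk]] := split_level Ex Ex' xx'.
have K0 : 0 < K by have := link_const_ge8; lra.
have r0 := ratio_gt0; have sk := scaleS k.
have dx : 0 <= x' - x by rewrite subr_ge0 ltW.
have far : scale k.+1 < x' - x.
  by have := dist_gt_of_not_linked nlk; rewrite distrC ger0_norm.
have near : x' - x <= K * scale k.
  by have := linked_dist_le Ex Ex' (scale_gt0 k) (scale_le1 k) lk; rewrite distrC ger0_norm.
have sep := center_sep Ex Ex' xx' lk nlk.
move: (embed_near k.+1 Ex) (embed_near k.+1 Ex') (embed_near k Ex) (embed_near k Ex').
rewrite /radius !ler_norml (center_linked Ex Ex' lk).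
move=> /andP [a1 a2] /andP [a3 a4] /andP [a5 a6] /andP [a7 a8]; split.
  apply: le_trans (_ : 4 * D' * scale k.+1 <= _); last by lra.
  have -> : 4 * D' * ratio / K * (x' - x) = 4 * D' * ratio * ((x' - x) / K).
    by rewrite mulrAC -mulrA.
  rewrite sk (mulrC (scale k)) [leRHS]mulrA ler_pM2l ?mulr_gt0 //.
  by rewrite ler_pdivrMr // mulrC.
apply: le_trans (_ : 4 * D' * scale k <= _); first by lra.
have -> : 4 * D' * scale k = (4 * D' / ratio) * scale k.+1.
  by rewrite sk; field; exact: lt0r_neq0.
by rewrite ler_pM2l ?divr_gt0 ?mulr_gt0 // ltW.
Qed.

End Coding.

End UnitRegular.

Section Interpolation.
Variables (R : realType) (E : set R) (g : R -> R) (a b : R).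
Hypotheses (closedE : closed E) (E0 : E 0) (E1 : E 1) (a_gt0 : 0 < a).
Hypothesis g_bilip : forall x x', E x -> E x' -> x < x' ->
  a * (x' - x) <= g x' - g x /\ g x' - g x <= b * (x' - x).

Definition below (z : R) : R := sup [set e | E e /\ e <= z].
Definition above (z : R) : R := inf [set e | E e /\ z <= e].

(* When [z] lies in [E], [below z = above z = z] and [slope z] is [0 / 0 = 0],
   which is harmless since it is multiplied by [z - below z = 0]. *)
Definition slope (z : R) : R := (g (above z) - g (below z)) / (above z - below z).
Definition interp (z : R) : R := g (below z) + slope z * (z - below z).

Lemma below_props z : 0 <= z ->
  [/\ E (below z), below z <= z & forall e, E e -> e <= z -> e <= below z].
Proof.
move=> z0; set S := [set e | E e /\ e <= z].
have ne : S !=set0 by exists 0.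
have ub : ubound S z by move=> e [].
have hs : has_sup S by split => //; exists z.
split; last 2 first.
- exact: ge_sup.
- by move=> e Ee ez; apply: ub_le_sup => //; exists z.
apply: closed_mem_of_approx closedE _ => ep ep0.
have [e [Ee ez] He] := sup_adherent ep0 hs.
exists e; split => //.
have : e <= below z by apply: ub_le_sup => //; exists z.
by rewrite /below -/S => ?; rewrite ger0_norm; lra.
Qed.

Lemma above_props z : z <= 1 ->
  [/\ E (above z), z <= above z & forall e, E e -> z <= e -> above z <= e].
Proof.
move=> z1; set S := [set e | E e /\ z <= e].
have ne : S !=set0 by exists 1.
have lb : lbound S z by move=> e [].
have hs : has_inf S by split => //; exists z.
split; last 2 first.
- exact: lb_le_inf.
- by move=> e Ee ez; apply: ge_inf => //; exists z.
apply: closed_mem_of_approx closedE _ => ep ep0.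
have [e [Ee ez] He] := inf_adherent ep0 hs.
exists e; split => //.
have : above z <= e by apply: ge_inf => //; exists z.
by rewrite /above -/S => ?; rewrite distrC ger0_norm; lra.
Qed.

Lemma g_bilip_le x x' : E x -> E x' -> x <= x' ->
  a * (x' - x) <= g x' - g x /\ g x' - g x <= b * (x' - x).
Proof.
move=> Ex Ex'; rewrite le_eqVlt => /orP [/eqP ->|]; last exact: g_bilip.
by rewrite !subrr !mulr0.
Qed.

Lemma below_or_above z e : 0 <= z <= 1 -> E e -> e <= below z \/ above z <= e.
Proof.
move=> /andP [z0 z1] Ee; have [_ _ bz] := below_props z0; have [_ _ za] := above_props z1.
by case: (leP e z) => ez; [left; apply: bz | right; apply: za => //; apply: ltW].
Qed.

Lemma slope_bounds z : 0 <= z <= 1 -> below z < above z -> a <= slope z <= b.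
Proof.
move=> /andP [z0 z1] ba; have [Eb _ _] := below_props z0; have [Ea _ _] := above_props z1.
have [lo hi] := g_bilip_le Eb Ea (ltW ba).
have d0 : 0 < above z - below z by rewrite subr_gt0.
by rewrite /slope ler_pdivlMr // ler_pdivrMr // lo hi.
Qed.

Lemma interp_E z : 0 <= z -> E z -> interp z = g z.
Proof.
move=> z0 Ez; have [_ bz bmax] := below_props z0.
have bzz : below z = z by apply/eqP; rewrite eq_le bz bmax.
by rewrite /interp bzz subrr mulr0 addr0.
Qed.

Lemma interp_below z : 0 <= z <= 1 ->
  a * (z - below z) <= interp z - g (below z) <= b * (z - below z).
Proof.
move=> zz; have /andP [z0 z1] := zz.
have [_ bz _] := below_props z0; have [_ za _] := above_props z1.
rewrite /interp addrAC subrr add0r.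
move: bz; rewrite le_eqVlt => /orP [/eqP ->|bz]; first by rewrite !subrr !mulr0 lexx.
have /andP [sa sb] := slope_bounds zz (lt_le_trans bz za).
have d0 : 0 < z - below z by rewrite subr_gt0.
by rewrite !ler_pM2r // sa sb.
Qed.

Lemma interp_above z : 0 <= z <= 1 ->
  a * (above z - z) <= g (above z) - interp z <= b * (above z - z).
Proof.
move=> zz; have /andP [z0 z1] := zz.
have [_ bz _] := below_props z0; have [_ za _] := above_props z1.
case: (ltP (below z) (above z)) => ba; last first.
  have eb : below z = z by apply: le_anti; rewrite bz (le_trans za ba).
  have ea : above z = z by apply: le_anti; rewrite za andbT -[X in _ <= X]eb.
  by rewrite /interp eb ea !subrr !mulr0 addr0 subrr lexx.
have /andP [sa sb] := slope_bounds zz ba.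
have -> : g (above z) - interp z = slope z * (above z - z).
  by rewrite /interp /slope; field; rewrite gt_eqF // subr_gt0.
have dz : 0 <= above z - z by rewrite subr_ge0.
by rewrite !ler_wpM2r.
Qed.

Lemma interp_incr z z' : 0 <= z <= 1 -> 0 <= z' <= 1 -> z < z' ->
  a * (z' - z) <= interp z' - interp z <= b * (z' - z).
Proof.
move=> zz zz' zz'lt; have /andP [z0 z1] := zz; have /andP [z0' z1'] := zz'.
have [_ bz _] := below_props z0; have [Ea za amin] := above_props z1.
have [Eb' bz' bmax'] := below_props z0'; have [_ za' _] := above_props z1'.
case: (leP (above z) (below z')) => split_gap.
  have /andP [a1 a2] := interp_above zz.
  have [b1 b2] := g_bilip_le Ea Eb' split_gap.
  have /andP [c1 c2] := interp_below zz'.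
  by apply/andP; split; lra.
have same_gap : below z' = below z /\ above z' = above z.
  split; apply: le_anti; apply/andP; split.
  - by case: (below_or_above zz Eb') => // ?; lra.
  - by apply: bmax'; [case: (below_props z0) | lra].
  - by case: (below_or_above zz' Ea) => // ?; lra.
  - by apply: amin; [case: (above_props z1') | lra].
have ba : below z < above z by lra.
have /andP [sa sb] := slope_bounds zz ba.
have -> : interp z' - interp z = slope z * (z' - z).
  by rewrite /interp /slope same_gap.1 same_gap.2; ring.
have d0 : 0 < z' - z by rewrite subr_gt0.
by rewrite !ler_pM2r // sa sb.
Qed.

Lemma interp_bilipschitz : bilipschitz_on `[0, 1] interp.
Proof.
set L := Num.max 1 (Num.max b a^-1).
have L1 : 1 <= L by rewrite le_max lexx.
have Lb : b <= L by rewrite !le_max lexx orbT.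
have La : L^-1 <= a.
  rewrite -[a]invrK lef_pV2 ?posrE ?invr_gt0 //; last lra.
  by rewrite !le_max lexx !orbT.
exists L; split => // x y; rewrite /= !in_itv /=.
wlog xy : x y / x <= y.
  move=> W xx yy; case: (leP x y) => [|/ltW] xy; first exact: W.
  by rewrite distrC (distrC (interp x)); apply: W.
move=> xx yy; move: xy; rewrite le_eqVlt => /orP [/eqP ->|xy].
  by rewrite !subrr normr0 !mulr0.
have /andP [lo hi] := interp_incr xx yy xy.
have d0 : 0 < y - x by rewrite subr_gt0.
rewrite distrC (distrC (interp x)) !ger0_norm ?(ltW d0) //; last first.
  by apply: le_trans lo; rewrite mulr_ge0 // ltW.
split; first by apply: le_trans lo; rewrite ler_pM2r.
by apply: le_trans hi _; rewrite ler_pM2r.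
Qed.

Lemma interp_range : (forall x, E x -> 0 <= g x <= 1) ->
  forall z, 0 <= z <= 1 -> 0 <= interp z <= 1.
Proof.
move=> g01 z zz; have /andP [z0 z1] := zz.
have [Eb bz _] := below_props z0; have [Ea za _] := above_props z1.
have /andP [a1 _] := interp_below zz; have /andP [b1 _] := interp_above zz.
have /andP [g1 _] := g01 _ Eb; have /andP [_ g2] := g01 _ Ea.
have : 0 <= a * (z - below z) by rewrite mulr_ge0 ?subr_ge0 // ltW.
have : 0 <= a * (above z - z) by rewrite mulr_ge0 ?subr_ge0 // ltW.
by move=> ? ?; apply/andP; split; lra.
Qed.

End Interpolation.

Lemma exists_branching (R : realType) (s t A B : R) : s < t -> 0 < B ->
  exists m : nat, (4 <= m)%N /\ A * m%:R `^ s <= B * (m%:R / 4) `^ t.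
Proof.
move=> st B0; set q := (4^-1 : R) `^ t.
have Bq : 0 < B * q by rewrite mulr_gt0 // powR_gt0.
have ts : 0 < t - s by rewrite subr_gt0.
have [m [m4 Hm]] := powR_nat_unbounded (A / (B * q)) 4 ts.
have mp : 0 < m%:R :> R by rewrite ltr0n (ltn_trans _ m4).
exists m; split => //.
have mt : m%:R `^ t = m%:R `^ (t - s) * m%:R `^ s :> R.
  by rewrite -powRD ?subrK //; apply/implyP => _; rewrite gt_eqF.
rewrite powRM ?(ltW mp) ?invr_ge0 // -/q mt.
have -> : B * (m%:R `^ (t - s) * m%:R `^ s * q) = m%:R `^ (t - s) * (B * q) * m%:R `^ s.
  by ring.
rewrite ler_pM2r ?powR_gt0 // -ler_pdivrMr //.
exact: ltW.
Qed.

Lemma diam_eq1 (R : realType) (E : set R) : (forall x, E x -> 0 <= x <= 1) ->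
  E 0 -> E 1 -> diam E = 1.
Proof.
move=> E01 E0 E1.
have ub : ubound [set `|x - y| | x in E & y in E] 1.
  move=> _ [x Ex [y Ey <-]]; have /andP [x0 x1] := E01 x Ex.
  by have /andP [y0 y1] := E01 y Ey; rewrite ler_norml; apply/andP; split; lra.
have d1 : [set `|x - y| | x in E & y in E] 1.
  by exists 1 => //; exists 0 => //; rewrite subr0 normr1.
apply: le_anti; apply/andP; split; first by apply: ge_sup => //; exists 1.
by apply: ub_le_sup => //; exists 1.
Qed.

Lemma diam_gt0_neq0 (R : realType) (E : set R) : 0 < diam E -> E !=set0.
Proof.
move=> d0; apply/set0P/eqP => E0; move: d0; rewrite /diam.
have -> : [set `|x - y| | x in E & y in E] = set0.
  by apply/seteqP; split => // z [x]; rewrite E0.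
by rewrite sup0 ltxx.
Qed.

Lemma regular_set_embedding (R : realType) (s t : R) (E E' : set R)
    (mu mu' : {measure set R -> \bar R}) (c C c' C' D' : R) :
  closed E -> (forall x, E x -> 0 <= x <= 1) -> E 0 -> E 1 ->
  mu (~` E) = 0%E -> 0 < c -> c <= C -> ahlfors_bounds mu E s c C 1 ->
  closed E' -> mu' (~` E') = 0%E -> 0 < c' -> c' <= C' ->
  ahlfors_bounds mu' E' t c' C' D' -> 0 < D' -> E' !=set0 -> s < t ->
  exists (g : R -> R) (a b : R), [/\ 0 < a, forall x, E x -> E' (g x) &
    forall x x', E x -> E x' -> x < x' ->
      a * (x' - x) <= g x' - g x /\ g x' - g x <= b * (x' - x)].
Proof.
move=> closedE E01 E0 E1 muEC c0 cC muE closedE' muE'C c'0 c'C' muE' D'0 [y0 E'y0] st.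
have s0 := ahlfors_dim_ge0 c0 cC muE E0 ltr01.
have t1 := ahlfors_dim_le1 closedE' muE'C c'0 c'C' muE' E'y0 D'0.
have s1 : s < 1 by lra.
set K := link_const s c C; have K8 : 8 <= K := link_const_ge8 s c C.
have [m [m4 branching]] := @exists_branching R s t (6 * C * C' * (8 * K) `^ s) (c * c') st
  (mulr_gt0 c0 c'0).
have {}branching : 3 * (2 * C * (8 * K * m%:R) `^ s) * C' <= c * (c' * (m%:R / 4) `^ t).
  have K0 : 0 <= 8 * K by lra.
  rewrite (powRM s K0 (ler0n R m)).
  by move: branching; rewrite (mulrC c) -!mulrA; congr (_ <= _); ring.
exists (embed E E' D' y0 m), (4 * D' * ratio R m / K), (4 * D' / ratio R m); split.
- by apply: divr_gt0; [rewrite !mulr_gt0 // ratio_gt0 | lra].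
- exact: (embed_mem closedE E01 E0 E1 muEC c0 cC muE s0 s1
    closedE' muE'C c'0 c'C' muE' D'0 E'y0 m4 branching).
- exact: (embed_bilip closedE E01 E0 E1 muEC c0 cC muE s0 s1
    closedE' muE'C c'0 c'C' muE' D'0 E'y0 m4 branching).
Qed.

Theorem mainTheorem5 (R : realType) (s t : R) (E E' : set R) :
  E `<=` `[0, 1] -> E' `<=` `[0, 1] ->
  ahlfors_regular s E -> ahlfors_regular t E' -> s < t ->
  E 0 -> E 1 ->
  exists f : R -> R,
    f @` `[0, 1] `<=` `[0, 1] /\ bilipschitz_on `[0, 1] f /\ f @` E `<=` E'.
Proof.
move=> sE sE' [cpE [_ [mu [c [C [muEC [c0 [cC muE]]]]]]]]
  [cpE' [dE' [mu' [c' [C' [muE'C [c'0 [c'C' muE']]]]]]]] st E0 E1.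
have E01 x : E x -> 0 <= x <= 1 by move/sE; rewrite /= in_itv.
have E'01 x : E' x -> 0 <= x <= 1 by move/sE'; rewrite /= in_itv.
have closedE : closed E := compact_closed (@norm_hausdorff _ _) cpE.
have closedE' : closed E' := compact_closed (@norm_hausdorff _ _) cpE'.
rewrite (diam_eq1 E01 E0 E1) in muE.
have [g [a [b [a0 gE' g_bilip]]]] := regular_set_embedding closedE E01 E0 E1
  muEC c0 cC muE closedE' muE'C c'0 c'C' muE' dE' (diam_gt0_neq0 dE') st.
exists (interp E g); split; [|split].
- move=> y [z]; rewrite /= !in_itv /= => z01 <-.
  exact: (interp_range closedE E0 E1 a0 g_bilip (fun x Ex => E'01 _ (gE' x Ex)) z01).
- exact: interp_bilipschitz g_bilip.
- move=> y [z Ez <-]; rewrite interp_E //; first exact: gE'.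
  by case/andP: (E01 z Ez).
Qed.
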